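(* Let $\Gamma\subseteq\mathbb R^n$ be an open convex set, $S\subseteq\Gamma$ a nonempty convex set, and $f:\Gamma\to\mathbb R$ a continuously differentiable function that is quasiconvex on $\Gamma$. Let $\bar S=\arg\min\{f(x)\mid x\in S\}$, and suppose $\bar x\in\bar S$ with $\nabla f(\bar x)\neq 0$. Define \[ \begin{aligned} S_1&:=\{x\in S\mid \nabla f(x)^T(\bar x-x)=0,\ \nabla f(x)\ne0\},\\ S_2&:=\{x\in S\mid \nabla f(x)^T(\bar x-x)\ge 0,\ \nabla f(x)\ne0\},\\ S_3&:=\{x\in S\mid \nabla f(x)^T(\bar x-x)=\nabla f(\bar x)^T(x-\bar x),\ \nabla f(x)\ne0\},\\ S_4&:=\{x\in S\mid \nabla f(x)^T(\bar x-x)\ge\nabla f(\bar x)^T(x-\bar x),\ \nabla f(x)\ne0\},\\ S_5&:=\{x\in S\mid \nabla f(x)^T(\bar x-x)=\nabla f(\bar x)^T(x-\bar x)=0,\ \nabla f(x)\ne0\}. \end{aligned} \] Then $\bar S=S_1=S_2=S_3=S_4=S_5$.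
   Context: A function $f:\Gamma\to\mathbb R$ on a convex set $\Gamma\subseteq\mathbb R^n$ is quasiconvex on $\Gamma$ iff $f(x+t(y-x))\le\max\{f(x),f(y)\}$ for all $x,y\in\Gamma$ and $t\in[0,1]$. *)

From Stdlib Require Import Reals.
From Stdlib Require Vectors.Fin.
Open Scope R_scope.

Definition vec (n : nat) := Fin.t n -> R.

Definition vadd {n} (u v : vec n) : vec n := fun i => u i + v i.
Definition vsub {n} (u v : vec n) : vec n := fun i => u i - v i.
Definition vscal {n} (t : R) (u : vec n) : vec n := fun i => t * u i.
Definition vzero {n} : vec n := fun _ => 0.

Fixpoint dot {n : nat} : vec n -> vec n -> R :=
  match n as m return vec m -> vec m -> R with
  | O => fun _ _ => 0
  | S k => fun u v => u Fin.F1 * v Fin.F1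
                      + dot (fun i => u (Fin.FS i)) (fun i => v (Fin.FS i))
  end.

Definition vnorm {n} (u : vec n) : R := sqrt (dot u u).

Definition vec_open_set {n} (G : vec n -> Prop) : Prop :=
  forall x, G x -> exists r, 0 < r /\ forall y, vnorm (vsub y x) < r -> G y.

Definition vec_convex_set {n} (G : vec n -> Prop) : Prop :=
  forall x y t, G x -> G y -> 0 <= t <= 1 -> G (vadd x (vscal t (vsub y x))).

Definition quasiconvex_on {n} (G : vec n -> Prop) (f : vec n -> R) : Prop :=
  forall x y t, G x -> G y -> 0 <= t <= 1 ->
    f (vadd x (vscal t (vsub y x))) <= Rmax (f x) (f y).

Definition vec_gradient_on {n} (G : vec n -> Prop) (f : vec n -> R) (g : vec n -> vec n) : Prop :=
  forall x, G x -> forall eps, 0 < eps -> exists delta, 0 < delta /\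
    forall y, G y -> vnorm (vsub y x) < delta ->
      Rabs (f y - f x - dot (g x) (vsub y x)) <= eps * vnorm (vsub y x).

Definition vec_continuous_on {n} (G : vec n -> Prop) (g : vec n -> vec n) : Prop :=
  forall x, G x -> forall eps, 0 < eps -> exists delta, 0 < delta /\
    forall y, G y -> vnorm (vsub y x) < delta -> vnorm (vsub (g y) (g x)) < eps.

Definition C1_on {n} (G : vec n -> Prop) (f : vec n -> R) (g : vec n -> vec n) : Prop :=
  vec_gradient_on G f g /\ vec_continuous_on G g.

Definition argmin_on {n} (S : vec n -> Prop) (f : vec n -> R) : vec n -> Prop :=
  fun x => S x /\ forall y, S y -> f x <= f y.

Definition set_eq {n} (A B : vec n -> Prop) : Prop := forall x, A x <-> B x.

From Stdlib Require Import Reals Lra FunctionalExtensionality.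
Open Scope R_scope.

(* For differentiable quasiconvex f, f y <= f x forces grad f(x).(y - x) <= 0; conversely,
   when grad f(x) <> 0, grad f(x).(y - x) >= 0 forces f x <= f y.  Combined with the
   first-order optimality condition at a minimiser, this identifies all five sets with the
   argmin as soon as every minimiser has a nonzero gradient.  That is where continuity of
   the gradient enters: if a minimiser x had grad f(x) = 0, quasiconvexity would spread the
   zero gradient over the segment (xbar, x] of minimisers, and continuity would give
   grad f(xbar) = 0. *)

Ltac vec_ring := apply functional_extensionality; intro; unfold vadd, vsub, vscal, vzero; ring.

Lemma dot_vscal_r n : forall (u v : vec n) t, dot u (vscal t v) = t * dot u v.
Proof. induction n; intros; simpl; [ring|]. unfold vscal in *. rewrite IHn. ring. Qed.

Lemma dot_vscal_l n : forall (u v : vec n) t, dot (vscal t u) v = t * dot u v.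
Proof. induction n; intros; simpl; [ring|]. unfold vscal in *. rewrite IHn. ring. Qed.

Lemma dot_vadd_r n : forall (u v w : vec n), dot u (vadd v w) = dot u v + dot u w.
Proof. induction n; intros; simpl; [ring|]. unfold vadd in *. rewrite IHn. ring. Qed.

Lemma dot_vzero_l n : forall (u : vec n), dot vzero u = 0.
Proof. induction n; intros; simpl; [ring|]. unfold vzero in *. rewrite IHn. ring. Qed.

Lemma dot_self_ge0 n : forall (u : vec n), 0 <= dot u u.
Proof. induction n; intros; simpl; [lra|]. specialize (IHn (fun i => u (Fin.FS i))). nra. Qed.

Lemma dot_self_eq0 n : forall (u : vec n), dot u u = 0 -> u = vzero.
Proof.
  induction n; intros u H; apply functional_extensionality; intro i.
  - inversion i.
  - simpl in H. pose proof (dot_self_ge0 _ (fun i => u (Fin.FS i))).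
    assert (H1 : u Fin.F1 = 0) by nra.
    assert (H2 : (fun i => u (Fin.FS i)) = vzero) by (apply IHn; nra).
    apply (Fin.caseS' i (fun i => u i = vzero i)); [exact H1|].
    intro j. exact (f_equal (fun v => v j) H2).
Qed.

Lemma vnorm_ge0 n (u : vec n) : 0 <= vnorm u.
Proof. apply sqrt_pos. Qed.

Lemma vnorm_eq0 n (u : vec n) : vnorm u = 0 -> u = vzero.
Proof. intro H. apply dot_self_eq0, sqrt_eq_0; [apply dot_self_ge0 | exact H]. Qed.

Lemma vnorm_vscal n (t : R) (u : vec n) : vnorm (vscal t u) = Rabs t * vnorm u.
Proof.
  unfold vnorm. rewrite dot_vscal_l, dot_vscal_r, <- Rmult_assoc.
  rewrite sqrt_mult_alt by nra. rewrite <- sqrt_Rsqr_abs. reflexivity.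
Qed.

Lemma vnorm_ray_step n (x h : vec n) t : 0 <= t -> vnorm (vsub (vadd x (vscal t h)) x) = t * vnorm h.
Proof.
  intro Ht. replace (vsub (vadd x (vscal t h)) x) with (vscal t h) by vec_ring.
  rewrite vnorm_vscal, Rabs_pos_eq by exact Ht. reflexivity.
Qed.

Lemma open_set_ray n (G : vec n -> Prop) x h :
  vec_open_set G -> G x ->
  exists t0, 0 < t0 /\ forall t, 0 <= t < t0 -> G (vadd x (vscal t h)).
Proof.
  intros Ho Hx. destruct (Ho x Hx) as [r [Hr Hball]].
  pose proof (vnorm_ge0 _ h). set (N := vnorm h + 1).
  exists (r / N). split; [unfold N; apply Rdiv_lt_0_compat; lra|].
  intros t Ht. apply Hball. rewrite vnorm_ray_step by lra.
  assert (E : r / N * N = r) by (unfold N; field; lra).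
  set (r' := r / N) in *. unfold N in *. nra.
Qed.

Section Gradient.

Variables (n : nat) (G : vec n -> Prop) (f : vec n -> R) (g : vec n -> vec n).
Hypothesis Hgrad : vec_gradient_on G f g.

Lemma gradient_on_ray x h eps :
  G x -> 0 < eps ->
  exists t0, 0 < t0 /\ forall t, 0 < t < t0 -> G (vadd x (vscal t h)) ->
    t * (dot (g x) h - eps) <= f (vadd x (vscal t h)) - f x <= t * (dot (g x) h + eps).
Proof.
  intros Hx He. pose proof (vnorm_ge0 _ h). set (N := vnorm h + 1).
  assert (HN : 0 < N) by (unfold N; lra).
  destruct (Hgrad x Hx (eps / N)) as [d [Hd Hnear]]; [apply Rdiv_lt_0_compat; lra|].
  exists (d / N). split; [apply Rdiv_lt_0_compat; lra|].
  intros t Ht Hxt. specialize (Hnear _ Hxt).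
  rewrite vnorm_ray_step in Hnear by lra.
  replace (vsub (vadd x (vscal t h)) x) with (vscal t h) in Hnear by vec_ring.
  rewrite dot_vscal_r in Hnear.
  assert (Ed : d / N * N = d) by (field; lra).
  assert (Ee : eps / N * N = eps) by (field; lra).
  set (d' := d / N) in *. set (e' := eps / N) in *.
  assert (Hclose : t * vnorm h < d) by (unfold N in *; nra).
  specialize (Hnear Hclose).
  assert (Herr : e' * (t * vnorm h) <= eps * t) by (unfold N in *; nra).
  unfold Rabs in Hnear; destruct Rcase_abs in Hnear; lra.
Qed.

Lemma gradient_on_open_ray x h eps :
  vec_open_set G -> G x -> 0 < eps ->
  exists t0, 0 < t0 /\ forall t, 0 < t < t0 -> G (vadd x (vscal t h)) /\
    t * (dot (g x) h - eps) <= f (vadd x (vscal t h)) - f x <= t * (dot (g x) h + eps).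
Proof.
  intros Ho Hx He.
  destruct (gradient_on_ray x h eps Hx He) as [t0 [Ht0 Hbnd]].
  destruct (open_set_ray _ G x h Ho Hx) as [t1 [Ht1 Hin]].
  exists (Rmin t0 t1). split; [apply Rmin_glb_lt; lra|].
  intros t Ht. pose proof (Rmin_l t0 t1). pose proof (Rmin_r t0 t1).
  assert (Hxt : G (vadd x (vscal t h))) by (apply Hin; lra).
  split; [exact Hxt | apply Hbnd; [lra | exact Hxt]].
Qed.

Lemma grad_dot_le0_of_ray_le x h :
  G x ->
  (forall t, 0 < t <= 1 -> G (vadd x (vscal t h)) /\ f (vadd x (vscal t h)) <= f x) ->
  dot (g x) h <= 0.
Proof.
  intros Hx Hray. apply Rnot_lt_le. intro Hpos.
  destruct (gradient_on_ray x h (dot (g x) h / 2) Hx) as [t0 [Ht0 Hbnd]]; [lra|].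
  set (t := Rmin (t0 / 2) 1).
  assert (Ht : 0 < t <= 1 /\ t < t0) by (unfold t, Rmin; destruct Rle_dec; lra).
  destruct (Hray t) as [Hxt Hle]; [lra|].
  destruct (Hbnd t) as [Hlow _]; [lra | exact Hxt | nra].
Qed.

Lemma grad_dot_ge0_of_ray_ge x h :
  G x ->
  (forall t, 0 < t <= 1 -> G (vadd x (vscal t h)) /\ f x <= f (vadd x (vscal t h))) ->
  0 <= dot (g x) h.
Proof.
  intros Hx Hray. apply Rnot_lt_le. intro Hneg.
  destruct (gradient_on_ray x h (- dot (g x) h / 2) Hx) as [t0 [Ht0 Hbnd]]; [lra|].
  set (t := Rmin (t0 / 2) 1).
  assert (Ht : 0 < t <= 1 /\ t < t0) by (unfold t, Rmin; destruct Rle_dec; lra).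
  destruct (Hray t) as [Hxt Hle]; [lra|].
  destruct (Hbnd t) as [_ Hup]; [lra | exact Hxt | nra].
Qed.

Lemma ray_below_level x h a :
  vec_open_set G -> G x -> f x < a ->
  exists t, 0 < t /\ G (vadd x (vscal t h)) /\ f (vadd x (vscal t h)) < a.
Proof.
  intros Ho Hx Ha.
  destruct (gradient_on_open_ray x h 1 Ho Hx) as [t0 [Ht0 Hbnd]]; [lra|].
  set (K := Rabs (dot (g x) h) + 1).
  assert (HK : 0 < K) by (unfold K; pose proof (Rabs_pos (dot (g x) h)); lra).
  set (t := Rmin (t0 / 2) ((a - f x) / (2 * K))).
  assert (Ht : 0 < t < t0).
  { unfold t. pose proof (Rmin_l (t0 / 2) ((a - f x) / (2 * K))).
    split; [apply Rmin_glb_lt; [lra | apply Rdiv_lt_0_compat; lra] | lra]. }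
  assert (HtK : t * K <= (a - f x) / 2).
  { assert (E : (a - f x) / (2 * K) * K = (a - f x) / 2) by (field; lra).
    pose proof (Rmin_r (t0 / 2) ((a - f x) / (2 * K))). fold t in H. nra. }
  destruct (Hbnd t Ht) as [Hxt [_ Hup]].
  exists t. split; [lra | split; [exact Hxt|]].
  pose proof (Rle_abs (dot (g x) h)). unfold K in HtK. nra.
Qed.

End Gradient.

Section Quasiconvex.

Variables (n : nat) (G : vec n -> Prop) (f : vec n -> R) (g : vec n -> vec n).
Hypotheses (Hopen : vec_open_set G) (Hconvex : vec_convex_set G)
  (Hquasi : quasiconvex_on G f) (Hgrad : vec_gradient_on G f g).

Lemma quasiconvex_grad_dot_le0 x y :
  G x -> G y -> f y <= f x -> dot (g x) (vsub y x) <= 0.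
Proof.
  intros Hx Hy Hle. apply (grad_dot_le0_of_ray_le n G f g Hgrad x); [exact Hx|].
  intros t Ht. split; [apply Hconvex; auto; lra|].
  eapply Rle_trans; [apply Hquasi; auto; lra|]. apply Rmax_lub; lra.
Qed.

(* If [f y < f x], pushing [y] a little along [g x] keeps it below the level [f x]
   while making the angle with [g x] acute, against the previous lemma. *)
Lemma quasiconvex_pseudoconvex_at x y :
  G x -> G y -> g x <> vzero -> 0 <= dot (g x) (vsub y x) -> f x <= f y.
Proof.
  intros Hx Hy Hnz Hdir. apply Rnot_lt_le. intro Hlt.
  destruct (ray_below_level n G f g Hgrad y (g x) (f x) Hopen Hy Hlt) as [t [Ht [Hyt Hft]]].
  pose proof (quasiconvex_grad_dot_le0 x _ Hx Hyt (Rlt_le _ _ Hft)) as Hle.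
  replace (vsub (vadd y (vscal t (g x))) x) with (vadd (vsub y x) (vscal t (g x))) in Hle
    by vec_ring.
  rewrite dot_vadd_r, dot_vscal_r in Hle.
  assert (Hgg : 0 < dot (g x) (g x)).
  { destruct (dot_self_ge0 _ (g x)) as [|E]; [assumption|].
    exfalso. apply Hnz, dot_self_eq0. auto. }
  nra.
Qed.

(* [z + mu T h] lies on the segment from [y] to [x + T h], so quasiconvexity bounds [f]
   there by [max (f y) (f (x + T h)) <= f z + o(T)] (as [g x = 0]); differentiability at
   [z] then forces [g z . h <= 0] for every [h], in particular for [h = g z]. *)
Lemma quasiconvex_grad_eq0_segment x y mu :
  G x -> G y -> 0 < mu <= 1 -> g x = vzero ->
  f x <= f (vadd y (vscal mu (vsub x y))) -> f y <= f (vadd y (vscal mu (vsub x y))) ->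
  g (vadd y (vscal mu (vsub x y))) = vzero.
Proof.
  intros Hx Hy Hmu Hx0. set (z := vadd y (vscal mu (vsub x y))). intros Hxz Hyz.
  assert (Hz : G z) by (apply Hconvex; auto; lra).
  set (h := g z). set (s := dot h h).
  apply dot_self_eq0. fold h s. apply Rle_antisym; [|apply dot_self_ge0].
  apply Rnot_lt_le. intro Hs.
  destruct (gradient_on_open_ray n G f g Hgrad z h (s / 2) Hopen Hz) as [t0 [Ht0 Hz_ray]]; [lra|].
  destruct (gradient_on_open_ray n G f g Hgrad x h (mu * s / 4) Hopen Hx) as [t1 [Ht1 Hx_ray]];
    [nra|].
  set (T := Rmin t0 t1 / 2).
  assert (HT : 0 < T /\ T < t0 /\ T < t1).
  { unfold T. pose proof (Rmin_l t0 t1). pose proof (Rmin_r t0 t1).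
    assert (0 < Rmin t0 t1) by (apply Rmin_glb_lt; lra). lra. }
  destruct (Hx_ray T) as [Hq [_ Hq_up]]; [lra|].
  rewrite Hx0, dot_vzero_l in Hq_up.
  destruct (Hz_ray (mu * T)) as [_ [Hp_low _]]; [nra|].
  set (q := vadd x (vscal T h)) in *.
  assert (Hp : vadd z (vscal (mu * T) h) = vadd y (vscal mu (vsub q y))) by (unfold z, q; vec_ring).
  pose proof (Hquasi y q mu Hy Hq (conj (Rlt_le _ _ (proj1 Hmu)) (proj2 Hmu))) as Hqc.
  rewrite <- Hp in Hqc.
  assert (Hgain : 0 < mu * T * s) by (apply Rmult_lt_0_compat; [apply Rmult_lt_0_compat|]; lra).
  change (dot (g z) h) with s in Hp_low.
  assert (Rmax (f y) (f q) < f (vadd z (vscal (mu * T) h))) by (apply Rmax_lub_lt; nra).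
  lra.
Qed.

End Quasiconvex.

Lemma vec_continuous_on_vzero n (G : vec n -> Prop) (g : vec n -> vec n) y :
  vec_continuous_on G g -> G y ->
  (forall d, 0 < d -> exists z, G z /\ vnorm (vsub z y) < d /\ g z = vzero) ->
  g y = vzero.
Proof.
  intros Hcont Hy Hnear. apply vnorm_eq0.
  apply Rle_antisym; [|apply vnorm_ge0]. apply Rnot_lt_le. intro Hpos.
  destruct (Hcont y Hy (vnorm (g y)) Hpos) as [d [Hd Hclose]].
  destruct (Hnear d Hd) as [z [Hz [Hzy Hz0]]].
  specialize (Hclose z Hz Hzy). rewrite Hz0 in Hclose.
  replace (vsub vzero (g y)) with (vscal (-1) (g y)) in Hclose by vec_ring.
  rewrite vnorm_vscal, Rabs_left in Hclose by lra. lra.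
Qed.

Section Argmin.

Variables (n : nat) (G S : vec n -> Prop) (f : vec n -> R) (g : vec n -> vec n).
Hypotheses (Hopen : vec_open_set G) (Hconvex : vec_convex_set G)
  (HSG : forall x, S x -> G x) (HSconvex : vec_convex_set S)
  (Hquasi : quasiconvex_on G f) (Hgrad : vec_gradient_on G f g).

Lemma argmin_first_order x y :
  argmin_on S f x -> S y -> 0 <= dot (g x) (vsub y x).
Proof.
  intros [Sx Hmin] Sy. apply (grad_dot_ge0_of_ray_ge n G f g Hgrad); [auto|].
  intros t Ht. assert (S (vadd x (vscal t (vsub y x)))) by (apply HSconvex; auto; lra).
  auto.
Qed.

Lemma argmin_grad_dot_eq0 x y :
  argmin_on S f x -> argmin_on S f y -> dot (g x) (vsub y x) = 0.
Proof.
  intros Hx Hy. apply Rle_antisym.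
  - apply (quasiconvex_grad_dot_le0 n G f g Hconvex Hquasi Hgrad); [apply HSG, Hx | apply HSG, Hy|].
    apply Hy, Hx.
  - apply argmin_first_order; [exact Hx | apply Hy].
Qed.

Lemma argmin_segment x y t :
  argmin_on S f x -> argmin_on S f y -> 0 <= t <= 1 ->
  argmin_on S f (vadd x (vscal t (vsub y x))).
Proof.
  intros [Sx Hx] [Sy Hy] Ht. split; [apply HSconvex; auto|].
  intros w Sw. eapply Rle_trans; [apply Hquasi; auto|].
  apply Rmax_lub; [apply Hx | eapply Rle_trans; [apply Hy, Sx | apply Hx]]; exact Sw.
Qed.

Lemma argmin_grad_neq0 xbar x :
  vec_continuous_on G g -> argmin_on S f xbar -> g xbar <> vzero ->
  argmin_on S f x -> g x <> vzero.
Proof.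
  intros Hcont Hxbar Hnz Hx Hx0. apply Hnz.
  apply (vec_continuous_on_vzero n G g); [exact Hcont | apply HSG, Hxbar|].
  intros d Hd. pose proof (vnorm_ge0 _ (vsub x xbar)) as Hn.
  set (mu := d / (vnorm (vsub x xbar) + d)).
  assert (Hmu0 : 0 < mu) by (unfold mu; apply Rdiv_lt_0_compat; lra).
  assert (E : mu * (vnorm (vsub x xbar) + d) = d) by (unfold mu; field; lra).
  assert (Hmu : 0 < mu <= 1) by nra.
  assert (Hmud : mu * vnorm (vsub x xbar) < d) by nra.
  set (z := vadd xbar (vscal mu (vsub x xbar))).
  assert (Hz : argmin_on S f z) by (apply argmin_segment; auto; lra).
  exists z. split; [apply HSG, Hz|]. split.
  - unfold z. rewrite vnorm_ray_step by lra. exact Hmud.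
  - apply (quasiconvex_grad_eq0_segment n G f g Hopen Hconvex Hquasi Hgrad);
      [apply HSG, Hx | apply HSG, Hxbar | exact Hmu | exact Hx0 | apply Hx, Hz | apply Hxbar, Hz].
Qed.

Lemma argmin_of_grad_dot_ge0 xbar x :
  argmin_on S f xbar -> S x -> g x <> vzero -> 0 <= dot (g x) (vsub xbar x) ->
  argmin_on S f x.
Proof.
  intros [Sxbar Hxbar] Sx Hnz Hdir.
  pose proof (quasiconvex_pseudoconvex_at n G f g Hopen Hconvex Hquasi Hgrad x xbar
                (HSG _ Sx) (HSG _ Sxbar) Hnz Hdir).
  split; [exact Sx|]. intros y Sy. specialize (Hxbar y Sy). lra.
Qed.

End Argmin.

Theorem theorem3 (n : nat) (Gam S : vec n -> Prop) (f : vec n -> R)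
  (gradf : vec n -> vec n) (xbar : vec n) :
  vec_open_set Gam -> vec_convex_set Gam ->
  (forall x, S x -> Gam x) -> (exists x, S x) -> vec_convex_set S ->
  C1_on Gam f gradf -> quasiconvex_on Gam f ->
  argmin_on S f xbar -> gradf xbar <> vzero ->
  let Sbar := argmin_on S f in
  let S1 := fun x => S x /\ dot (gradf x) (vsub xbar x) = 0 /\ gradf x <> vzero in
  let S2 := fun x => S x /\ dot (gradf x) (vsub xbar x) >= 0 /\ gradf x <> vzero in
  let S3 := fun x => S x /\ dot (gradf x) (vsub xbar x) = dot (gradf xbar) (vsub x xbar)
                         /\ gradf x <> vzero in
  let S4 := fun x => S x /\ dot (gradf x) (vsub xbar x) >= dot (gradf xbar) (vsub x xbar)
                         /\ gradf x <> vzero in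
  let S5 := fun x => S x /\ dot (gradf x) (vsub xbar x) = dot (gradf xbar) (vsub x xbar)
                         /\ dot (gradf xbar) (vsub x xbar) = 0 /\ gradf x <> vzero in
  set_eq Sbar S1 /\ set_eq Sbar S2 /\ set_eq Sbar S3 /\ set_eq Sbar S4 /\ set_eq Sbar S5.
Proof.
  intros Ho Hc HSG _ HSc [Hgrad Hcont] Hq Hxbar Hnz Sbar S1 S2 S3 S4 S5.
  assert (Hmin : forall x, Sbar x ->
    S x /\ dot (gradf x) (vsub xbar x) = 0 /\ dot (gradf xbar) (vsub x xbar) = 0
    /\ gradf x <> vzero).
  { intros x Hx. split; [apply Hx|]. split; [|split].
    - apply (argmin_grad_dot_eq0 n Gam S f gradf); auto.
    - apply (argmin_grad_dot_eq0 n Gam S f gradf); auto.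
    - apply (argmin_grad_neq0 n Gam S f gradf Ho Hc HSG HSc Hq Hgrad xbar); auto. }
  assert (Hback : forall x, S x -> gradf x <> vzero -> dot (gradf x) (vsub xbar x) >= 0 ->
    Sbar x).
  { intros x Sx Hx0 Hdir. apply (argmin_of_grad_dot_ge0 n Gam S f gradf Ho Hc HSG Hq Hgrad xbar);
      auto; lra. }
  assert (Hfirst : forall x, S x -> 0 <= dot (gradf xbar) (vsub x xbar))
    by (intros; apply (argmin_first_order n Gam S f gradf HSG HSc Hgrad); auto).
  split; [|split; [|split; [|split]]]; intro x; split; intro Hx.
  all: try (destruct (Hmin x Hx) as (Sx & E1 & E2 & Hx0); repeat split; auto; lra).
  all: destruct Hx as (Sx & Hx); repeat match goal with H : _ /\ _ |- _ => destruct H end.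
  all: apply Hback; auto; pose proof (Hfirst x Sx); lra.
Qed.
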